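(* For every modal formula $A$: if $\mathsf{BIGL}\models A$ then $\mathsf{PIGL}\models A$.
   Context: Modal formulas: $A ::= p \mid \bot \mid A\wedge A \mid A \vee A \mid A \to A \mid \Box A \mid \Diamond A$ over propositional symbols $\mathsf{Pr}$. Birelational models $\mathcal B=(W,\le,R^{\mathcal B},V)$: nonempty $W$, partial order $\le$, $R^{\mathcal B}\subseteq W^2$ with (F1) $w\le w',wR^{\mathcal B}v\Rightarrow\exists v'(v\le v'\wedge w'R^{\mathcal B}v')$ and (F2) $wR^{\mathcal B}v,v\le v'\Rightarrow\exists w'(w\le w'\wedge w'R^{\mathcal B}v')$, monotone valuation $V:W\to\mathcal P(\mathsf{Pr})$. Satisfaction: $p$ via $V$; $\bot$ never; $\wedge,\vee$ pointwise; $w\models A\to B$ iff every $w'\ge w$ satisfying $A$ satisfies $B$; $w\models\Box A$ iff for all $w'\ge w$ and $v$ with $w'R^{\mathcal B}v$, $v\models A$; $w\models\Diamond A$ iff some $v$ with $wR^{\mathcal B}v$ satisfies $A$. $\mathsf{BIGL}$ is the class of birelational models with $R^{\mathcal B}$ transitive and no infinite chain $x_1\le y_1R^{\mathcal B}x_2\le y_2R^{\mathcal B}x_3\cdots$; $\mathsf{BIGL}\models A$ means every world of every such model satisfies $A$. A Kripke structure $\mathcal K$: a nonempty poset $(W,\le)$; nonempty domains $D_w$ with $D_w\subseteq D_{w'}$ for $w\le w'$; maps $\mathsf{Pr}_w:\mathsf{Pr}\to\mathcal P(D_w)$, monotone in $w$; relations $R_w\subseteq D_w\times D_w$ with $R_w\subseteq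 R_{w'}$ for $w\le w'$. A $w$-environment is $\rho:\mathrm{Var}\to D_w$. $\mathcal K,w\models^\rho x:A$ is defined by: $x:p$ iff $\rho(x)\in\mathsf{Pr}_w(p)$; $\bot$ never; $\wedge,\vee$ pointwise; $x:A\to B$ iff for all $w'\ge w$, $\mathcal K,w'\models^\rho x:A$ implies $\mathcal K,w'\models^\rho x:B$; $x:\Box A$ iff for all $w'\ge w$ and $d\in D_{w'}$ with $\rho(x)R_{w'}d$, $\mathcal K,w'\models^{\rho[y:=d]}y:A$; $x:\Diamond A$ iff there is $d\in D_w$ with $\rho(x)R_wd$ and $\mathcal K,w\models^{\rho[y:=d]}y:A$. With $D_W=\{(w,d):d\in D_w\}$, $(w,d)\le_{D_W}(w',d')$ iff $w\le w'$ and $d=d'$, and $(w,d)R_{D_W}(w',d')$ iff $w=w'$ and $dR_wd'$, $\mathsf{PIGL}$ is the class of Kripke structures with every $R_w$ transitive and no infinite path $(w_1,d_1)\le_{D_W}(w_2,d_1)R_{D_W}(w_2,d_2)\le_{D_W}(w_3,d_2)R_{D_W}\cdots$. $\mathsf{PIGL}\models A$ means $\mathcal K,w\models^\rho x:A$ for all $\mathcal K\in\mathsf{PIGL}$, all worlds $w$, all $w$-environments $\rho$, and all variables $x$. *)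

Set Implicit Arguments.

Inductive form (Pr : Type) : Type :=
| FVar : Pr -> form Pr
| FBot : form Pr
| FAnd : form Pr -> form Pr -> form Pr
| FOr  : form Pr -> form Pr -> form Pr
| FImp : form Pr -> form Pr -> form Pr
| FBox : form Pr -> form Pr
| FDia : form Pr -> form Pr.
Arguments FBot {Pr}.

Record BModel (Pr : Type) : Type := {
  bW : Type;
  ble : bW -> bW -> Prop;
  bR : bW -> bW -> Prop;
  bV : bW -> Pr -> Prop;
  bW_nonempty : inhabited bW;
  ble_refl : forall w, ble w w;
  ble_trans : forall u v w, ble u v -> ble v w -> ble u w;
  ble_antisym : forall u v, ble u v -> ble v u -> u = v;
  bF1 : forall w w' v, ble w w' -> bR w v -> exists v', ble v v' /\ bR w' v';
  bF2 : forall w v v', bR w v -> ble v v' -> exists w', ble w w' /\ bR w' v';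
  bV_mono : forall w w' p, ble w w' -> bV w p -> bV w' p
}.

Fixpoint bsat (Pr : Type) (M : BModel Pr) (w : bW M) (A : form Pr) : Prop :=
  match A with
  | FVar p => bV M w p
  | FBot => False
  | FAnd B C => bsat M w B /\ bsat M w C
  | FOr B C => bsat M w B \/ bsat M w C
  | FImp B C => forall w', ble M w w' -> bsat M w' B -> bsat M w' C
  | FBox B => forall w' v, ble M w w' -> bR M w' v -> bsat M v B
  | FDia B => exists v, bR M w v /\ bsat M v B
  end.

Definition in_BIGL (Pr : Type) (M : BModel Pr) : Prop :=
  (forall u v w, bR M u v -> bR M v w -> bR M u w) /\
  ~ (exists (x y : nat -> bW M),
        forall n, ble M (x n) (y n) /\ bR M (y n) (x (S n))).

Definition BIGL_valid (Pr : Type) (A : form Pr) : Prop :=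
  forall M : BModel Pr, in_BIGL M -> forall w : bW M, bsat M w A.

Definition var := nat.

Record KStruct (Pr : Type) : Type := {
  kW : Type;
  kle : kW -> kW -> Prop;
  kU : Type;
  kD : kW -> kU -> Prop;
  kPr : kW -> Pr -> kU -> Prop;
  kR : kW -> kU -> kU -> Prop;
  kW_nonempty : inhabited kW;
  kle_refl : forall w, kle w w;
  kle_trans : forall u v w, kle u v -> kle v w -> kle u w;
  kle_antisym : forall u v, kle u v -> kle v u -> u = v;
  kD_nonempty : forall w, exists d, kD w d;
  kD_mono : forall w w' d, kle w w' -> kD w d -> kD w' d;
  kPr_dom : forall w p d, kPr w p d -> kD w d;
  kPr_mono : forall w w' p d, kle w w' -> kPr w p d -> kPr w' p d;
  kR_dom : forall w d e, kR w d e -> kD w d /\ kD w e;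
  kR_mono : forall w w' d e, kle w w' -> kR w d e -> kR w' d e
}.

Definition env_at (Pr : Type) (K : KStruct Pr) (w : kW K) (rho : var -> kU K) : Prop :=
  forall x, kD K w (rho x).

Definition upd (U : Type) (rho : var -> U) (y : var) (d : U) : var -> U :=
  fun z => if Nat.eqb z y then d else rho z.

(** The bound variable [y] in the Box/Diamond clauses is chosen as [S x]. *)
Fixpoint ksat (Pr : Type) (K : KStruct Pr) (w : kW K) (rho : var -> kU K)
  (x : var) (A : form Pr) : Prop :=
  match A with
  | FVar p => kPr K w p (rho x)
  | FBot => False
  | FAnd B C => ksat K w rho x B /\ ksat K w rho x C
  | FOr B C => ksat K w rho x B \/ ksat K w rho x C
  | FImp B C => forall w', kle K w w' -> ksat K w' rho x B -> ksat K w' rho x C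
  | FBox B => forall w' d, kle K w w' -> kD K w' d -> kR K w' (rho x) d ->
                ksat K w' (upd rho (S x) d) (S x) B
  | FDia B => exists d, kD K w d /\ kR K w (rho x) d /\
                ksat K w (upd rho (S x) d) (S x) B
  end.

Definition in_PIGL (Pr : Type) (K : KStruct Pr) : Prop :=
  (forall w d e f, kR K w d e -> kR K w e f -> kR K w d f) /\
  ~ (exists (ws : nat -> kW K) (ds : nat -> kU K),
        forall n, kD K (ws n) (ds n) /\ kle K (ws n) (ws (S n)) /\
                  kR K (ws (S n)) (ds n) (ds (S n))).

Definition PIGL_valid (Pr : Type) (A : form Pr) : Prop :=
  forall K : KStruct Pr, in_PIGL K ->
  forall (w : kW K) (rho : var -> kU K), env_at K w rho ->
  forall x : var, ksat K w rho x A.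

(** Every Kripke structure K induces a birelational model M(K), the
    "domain model": its worlds are the points (w, d) with d in D_w, ordered by
    (w, d) <= (w', d) for w <= w', and related by (w, d) R (w, d') when
    d R_w d'.  Atoms hold at (w, d) when d belongs to Pr_w(p).

    1. M(K) is a birelational model: <= is a partial order, the frame
       conditions (F1)/(F2) and monotonicity of V follow from monotonicity of
       the domains, of R_w and of Pr_w.
    2. M(K) is in BIGL: transitivity of R is transitivity of each R_w, and an
       infinite chain x1 <= y1 R x2 <= y2 R ... in M(K) is literally an
       infinite path in D_W, which PIGL forbids.
    3. Truth lemma: x : A holds at w under rho iff A holds at any point
       (w, d) of M(K) with d = rho(x).
    Hence a BIGL-valid formula holds at (w, rho(x)) in M(K), so x : A holds. *)

From Stdlib Require Import ProofIrrelevance Arith.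

Lemma upd_same (U : Type) (rho : var -> U) (y : var) (d : U) : upd rho y d y = d.
Proof. unfold upd. rewrite Nat.eqb_refl. reflexivity. Qed.
Arguments upd_same {U}.

Section DomainModel.
Variable Pr : Type.
Variable K : KStruct Pr.

Record point : Type := Point { pw : kW K; pd : kU K; p_in : kD K pw pd }.

Definition point_le (u v : point) : Prop := kle K (pw u) (pw v) /\ pd u = pd v.
Definition point_R (u v : point) : Prop :=
  pw u = pw v /\ kR K (pw u) (pd u) (pd v).
Definition point_V (u : point) (p : Pr) : Prop := kPr K (pw u) p (pd u).

Definition lift (v : point) (w' : kW K) (L : kle K (pw v) w') : point :=
  Point w' (pd v) (kD_mono K _ _ _ L (p_in v)).

Lemma point_le_lift (v : point) (w' : kW K) (L : kle K (pw v) w') :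
  point_le v (lift v w' L).
Proof. split; [exact L | reflexivity]. Qed.

Lemma point_inhabited : inhabited point.
Proof.
  destruct (kW_nonempty K) as [w]. destruct (kD_nonempty K w) as [d Hd].
  exact (inhabits (Point w d Hd)).
Qed.

Lemma point_le_refl : forall u, point_le u u.
Proof. intros u; split; [apply kle_refl | reflexivity]. Qed.

Lemma point_le_trans : forall u v w, point_le u v -> point_le v w -> point_le u w.
Proof.
  intros u v w [H1 H2] [H3 H4]; split; [eapply kle_trans; eauto | congruence].
Qed.

(** Antisymmetry needs proof irrelevance for the membership proofs. *)
Lemma point_le_antisym : forall u v, point_le u v -> point_le v u -> u = v.
Proof.
  intros [w1 d1 h1] [w2 d2 h2] [H1 H2] [H3 _]; simpl in *.
  pose proof (kle_antisym K _ _ H1 H3). subst. f_equal. apply proof_irrelevance.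
Qed.

Lemma point_F1 : forall u u' v, point_le u u' -> point_R u v ->
  exists v', point_le v v' /\ point_R u' v'.
Proof.
  intros [w1 d1 h1] [w2 d2 h2] [w3 d3 h3] [L E] [R1 R2]; simpl in *. subst.
  exists (Point w2 d3 (kD_mono K _ _ _ L h3)).
  split; split; simpl; auto. eapply kR_mono; eauto.
Qed.

Lemma point_F2 : forall u v v', point_R u v -> point_le v v' ->
  exists u', point_le u u' /\ point_R u' v'.
Proof.
  intros [w1 d1 h1] [w2 d2 h2] [w3 d3 h3] [R1 R2] [L E]; simpl in *. subst.
  exists (Point w3 d1 (kD_mono K _ _ _ L h1)).
  split; split; simpl; auto. eapply kR_mono; eauto.
Qed.

Lemma point_V_mono : forall u u' p, point_le u u' -> point_V u p -> point_V u' p.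
Proof.
  intros [w1 d1 h1] [w2 d2 h2] p [L E]; unfold point_V; simpl in *. subst.
  apply kPr_mono; exact L.
Qed.

Definition domain_model : BModel Pr :=
  {| bW := point; ble := point_le; bR := point_R; bV := point_V;
     bW_nonempty := point_inhabited; ble_refl := point_le_refl;
     ble_trans := point_le_trans; ble_antisym := point_le_antisym;
     bF1 := point_F1; bF2 := point_F2; bV_mono := point_V_mono |}.

Lemma domain_model_BIGL : in_PIGL K -> in_BIGL domain_model.
Proof.
  intros [Htrans Hwf]. split.
  - intros u v w [R1 R2] [R3 R4]; simpl in *. split; [congruence |].
    rewrite <- R1 in R4. eapply Htrans; eauto.
  - intros [xs [ys Hchain]]. apply Hwf.
    exists (fun n => pw (xs n)), (fun n => pd (xs n)). intros n.
    destruct (Hchain n) as [[L E] [R1 R2]]; simpl in *.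
    split; [apply p_in | split].
    + rewrite <- R1; exact L.
    + rewrite E, <- R1. exact R2.
Qed.

Definition agrees (A : form Pr) : Prop :=
  forall (rho : var -> kU K) (x : var) (v : point), pd v = rho x ->
  (ksat K (pw v) rho x A <-> bsat domain_model v A).

Lemma agrees_imp {B C : form Pr} : agrees B -> agrees C -> agrees (FImp B C).
Proof.
  intros IHB IHC rho x v E; simpl. split.
  - intros H v' [L E'] HB.
    assert (E'' : pd v' = rho x) by congruence.
    apply (IHC rho x v' E''), H; [exact L |]. apply (IHB rho x v' E''), HB.
  - intros H w' L HB.
    apply (IHC rho x (lift v w' L) E), H; [apply point_le_lift |].
    apply (IHB rho x (lift v w' L) E), HB.
Qed.

Lemma agrees_box {B : form Pr} : agrees B -> agrees (FBox B).
Proof.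
  intros IHB rho x v E; simpl. split.
  - intros H v1 v2 [L E1] [R1 R2].
    apply (IHB (upd rho (S x) (pd v2)) (S x) v2 (eq_sym (upd_same _ _ _))).
    rewrite <- R1. apply H; [exact L | rewrite R1; apply p_in |].
    rewrite <- E, E1. exact R2.
  - intros H w' d L Hd Hr.
    apply (IHB (upd rho (S x) d) (S x) (Point w' d Hd) (eq_sym (upd_same _ _ _))).
    apply (H (lift v w' L)); [apply point_le_lift |].
    split; simpl; [reflexivity | rewrite E; exact Hr].
Qed.

Lemma agrees_dia {B : form Pr} : agrees B -> agrees (FDia B).
Proof.
  intros IHB rho x v E; simpl. split.
  - intros [d [Hd [Hr Hs]]].
    exists (Point (pw v) d Hd). split.
    + split; simpl; [reflexivity | rewrite E; exact Hr].
    + apply (IHB (upd rho (S x) d) (S x) (Point (pw v) d Hd)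
               (eq_sym (upd_same _ _ _))), Hs.
  - intros [v' [[R1 R2] Hb]].
    exists (pd v'). split; [| split].
    + rewrite R1. apply p_in.
    + rewrite <- E. exact R2.
    + rewrite R1.
      apply (IHB (upd rho (S x) (pd v')) (S x) v' (eq_sym (upd_same _ _ _))), Hb.
Qed.

Lemma truth (A : form Pr) : agrees A.
Proof.
  induction A as [p | | B IHB C IHC | B IHB C IHC | B IHB C IHC | B IHB | B IHB].
  - intros rho x v E; simpl. unfold point_V. rewrite E. tauto.
  - intros rho x v E; simpl. tauto.
  - intros rho x v E; simpl. rewrite (IHB rho x v E), (IHC rho x v E). tauto.
  - intros rho x v E; simpl. rewrite (IHB rho x v E), (IHC rho x v E). tauto.
  - exact (agrees_imp IHB IHC).
  - exact (agrees_box IHB).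
  - exact (agrees_dia IHB).
Qed.

End DomainModel.

Theorem mainTheorem7 (Pr : Type) (A : form Pr) :
  BIGL_valid A -> PIGL_valid A.
Proof.
  intros Hvalid K HK w rho Henv x.
  set (v := @Point Pr K w (rho x) (Henv x)).
  apply (@truth Pr K A rho x v eq_refl).
  apply Hvalid, domain_model_BIGL, HK.
Qed.
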